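(* Let $n\ge 5$ be even and let $x,y$ be adjacent vertices of $Q_n$ with $f_n(x)+f_n(y)=\operatorname{str}_{f_n}(Q_n)$. If $x$ and $y$ both begin with $10$, then $$\operatorname{str}_{f_n}(Q_n)\le \operatorname{str}_{f_{n-2}}(Q_{n-2})+3\cdot 2^{n-2}+\binom{n-3}{\lceil (n-3)/2\rceil}+\binom{n-2}{\lceil (n-2)/2\rceil}.$$
   Context: $Q_n$ is the $n$-dimensional hypercube: vertices are the $n$-bit strings, adjacent iff they differ in exactly one position. For a bijection $f:V(G)\to\{1,\dots,|V(G)|\}$, $\operatorname{str}_f(G)=\max\{f(u)+f(v):uv\in E(G)\}$. An $n$-bit string is $x_1\cdots x_n$, $x_i\in\{0,1\}$; its weight is its number of $1$s. Lexicographic order: $x<y$ if for some $k$, $x_j=y_j$ for $j<k$ and $x_k<y_k$. $S_n^i$ is the sequence of $n$-bit strings of weight $i$ in increasing lexicographic order; $R_n^i$ is the same set in decreasing lexicographic order. $S_n$ is the concatenation $(R_n^1,R_n^3,\dots,R_n^{n-1},S_n^n,S_n^{n-2},\dots,S_n^2,S_n^0)$ for even $n$ and $(R_n^1,R_n^3,\dots,R_n^{n-2},R_n^n,S_n^{n-1},\dots,S_n^2,S_n^0)$ for odd $n$; $f_n$ maps the string in position $j$ of $S_n$ to $j$. *)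

From mathcomp Require Import all_boot.
Set Implicit Arguments. Unset Strict Implicit. Unset Printing Implicit Defensive.

(* Vertices of Q_n: n-bit strings x_1 ... x_n, as n.-tuple bool
   (position 1 of the paper is index 0 of the tuple). *)
Definition bits (n : nat) := n.-tuple bool.

Definition weight (s : seq bool) : nat := count id s.

Definition hadj n (x y : bits n) : bool :=
  (\sum_(i < n) (tnth x i != tnth y i)) == 1.

Fixpoint lexlt (x y : seq bool) : bool :=
  match x, y with
  | a :: x', b :: y' => (~~ a && b) || ((a == b) && lexlt x' y')
  | _, _ => false
  end.
Definition lexle (x y : seq bool) : bool := (x == y) || lexlt x y.

Definition Sni (n i : nat) : seq (bits n) :=
  sort (fun x y : bits n => lexle x y) [seq x : bits n <- enum {: bits n} | weight x == i].
Definition Rni (n i : nat) : seq (bits n) := rev (Sni n i).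

(* S_n: R^1, R^3, ... (odd weights increasing), then S^m, S^{m-2}, ..., S^0
   (even weights decreasing).  For odd n, R_n^n = S_n^n (one string), so this
   matches both cases of the paper's definition. *)
Definition Sn (n : nat) : seq (bits n) :=
  flatten [seq Rni n i | i <- [seq i <- iota 0 n.+1 | odd i]] ++
  flatten [seq Sni n i | i <- rev [seq i <- iota 0 n.+1 | ~~ odd i]].

Definition fn (n : nat) (x : bits n) : nat := (index x (Sn n)).+1.

Definition strQ (n : nat) : nat :=
  \max_(p : bits n * bits n | hadj p.1 p.2) (fn p.1 + fn p.2).

From mathcomp Require Import all_boot.
From mathcomp Require Import zify.
Set Implicit Arguments. Unset Strict Implicit. Unset Printing Implicit Defensive.

(* Write x = 10x' and y = 10y' with m = n - 2, and let x'', y'' be the bitwise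
   complements of x', y'; they are adjacent in Q_m, so
   f_m(x'') + f_m(y'') <= str_{f_m}(Q_m).  The position of a string in S_n is the
   number of strings in the weight classes listed before its own, plus its rank
   inside its class.  Complementation reverses the lexicographic order and maps
   weight w to m - w, so the rank of 10x' among the strings 10z of its class is
   the rank of x'' in its own class (and likewise for y').  Hence
   f_n(x) + f_n(y) - f_m(x'') - f_m(y'') is a combination of binomial
   coefficients; one of x', y' has even weight, and Pascal's rule, the equal
   sizes of the even and odd weight classes and the alternating binomial sum
   bound it by 3 * 2^m plus two central binomial coefficients. *)

Lemma leq_bin_succ N k : k.*2 < N -> 'C(N, k) <= 'C(N, k.+1).
Proof.
move=> hk; rewrite -(leq_pmul2r (ltn0Sn k)) [X in _ <= X]mulnC mul_bin_left mulnC.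
by apply: leq_mul => //; lia.
Qed.

Lemma leq_bin_half N k j : k <= j -> j <= uphalf N -> 'C(N, k) <= 'C(N, j).
Proof.
elim: j => [|j IH] hkj hj; first by rewrite leqn0 in hkj; rewrite (eqP hkj).
case: (ltngtP k j.+1) hkj => // [hlt _|-> //].
rewrite uphalf_half in hj.
by apply: leq_trans (IH _ _) (leq_bin_succ _); lia.
Qed.

Lemma leq_bin_uphalf N k : 'C(N, k) <= 'C(N, uphalf N).
Proof.
case: (leqP k (uphalf N)) => hk; first exact: leq_bin_half.
case: (leqP k N) => hkN; last by rewrite bin_small.
by rewrite -bin_sub //; apply: leq_bin_half => //; rewrite uphalf_half in hk *; lia.
Qed.

Lemma lexlt_irr s : lexlt s s = false.
Proof. by elim: s => [|a s IH] //=; rewrite IH eqxx andbF andNb. Qed.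

Lemma lexlt_trans a b c : lexlt a b -> lexlt b c -> lexlt a c.
Proof.
elim: a b c => [|x a IH] [|y b] [|z c] //=.
by case: x; case: y; case: z => //=; rewrite ?andbF ?orbF //=; exact: IH.
Qed.

Lemma lexlt_total a b : size a = size b -> a != b -> lexlt a b || lexlt b a.
Proof.
elim: a b => [|x a IH] [|y b] //= [hs]; rewrite eqseq_cons negb_and.
by case: x y => [] [] //=; rewrite ?eqxx /= => hne; exact: IH.
Qed.

Lemma lexlt_map_negb a b : size a = size b ->
  lexlt (map negb a) (map negb b) = lexlt b a.
Proof. by elim: a b => [|x a IH] [|y b] //= [hs]; rewrite IH //; case: x; case: y. Qed.

Lemma lexle_trans : transitive lexle.
Proof.
move=> b a c; rewrite /lexle => /orP[/eqP->//|h1] /orP[/eqP<-|h2].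
  by rewrite h1 orbT.
by rewrite (lexlt_trans h1 h2) orbT.
Qed.

Lemma lexle_anti a b : lexle a b -> lexle b a -> a = b.
Proof.
rewrite /lexle => /orP[/eqP//|h1] /orP[/eqP//|h2].
by have := lexlt_trans h1 h2; rewrite lexlt_irr.
Qed.

Lemma lexlt_def a b : lexlt a b = (b != a) && lexle a b.
Proof. by rewrite /lexle; case: (eqVneq a b) => [->|] /=; rewrite ?lexlt_irr. Qed.

(* [bitseqs k] lists the k-bit strings as plain sequences; unlike [enum], it
   unfolds along the first bit. *)
Fixpoint bitseqs (k : nat) : seq (seq bool) :=
  if k is k'.+1 then [seq true :: s | s <- bitseqs k'] ++ [seq false :: s | s <- bitseqs k']
  else [:: [::]].

Lemma mem_bitseqs k s : (s \in bitseqs k) = (size s == k).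
Proof.
elim: k s => [|k IH] [|a s] //=; rewrite mem_cat.
  by apply/orP => -[] /mapP[].
have inj (b : bool) : injective (cons b) by move=> u v [].
rewrite eqSS -IH; case: a; rewrite (mem_map (inj _)).
  have -> : (true :: s \in [seq false :: u | u <- bitseqs k]) = false by apply/mapP => -[].
  by rewrite orbF.
by have -> : (false :: s \in [seq true :: u | u <- bitseqs k]) = false by apply/mapP => -[].
Qed.

Lemma uniq_bitseqs k : uniq (bitseqs k).
Proof.
elim: k => [|k IH] //=; rewrite cat_uniq !map_inj_uniq ?IH //=; try by move=> u v [].
by rewrite andbT; apply/hasPn => s /mapP[u _ ->]; apply/mapP => -[].
Qed.

Lemma size_bitseqs k : size (bitseqs k) = 2 ^ k.
Proof. by elim: k => [|k IH] //=; rewrite size_cat !size_map IH expnS mul2n addnn. Qed.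

Lemma count_bitseqsS k (p : pred (seq bool)) :
  count p (bitseqs k.+1) =
  count (fun s => p (true :: s)) (bitseqs k) + count (fun s => p (false :: s)) (bitseqs k).
Proof. by rewrite /= count_cat !count_map. Qed.

Lemma count_enum_bits k (p : pred (seq bool)) :
  count (fun z : bits k => p z) (enum {: bits k}) = count p (bitseqs k).
Proof.
have /permP <- : perm_eq (map val (enum {: bits k})) (bitseqs k).
  apply: uniq_perm; [by rewrite map_inj_uniq ?enum_uniq //; exact: val_inj | exact: uniq_bitseqs|].
  move=> s; rewrite mem_bitseqs; apply/mapP/idP => [[t _ ->]|hs]; first by rewrite size_tuple.
  by exists (Tuple hs); rewrite ?mem_enum.
by rewrite [RHS]count_map.
Qed.

Lemma count_bitseqs_negb k (p : pred (seq bool)) :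
  count p (bitseqs k) = count (fun s => p (map negb s)) (bitseqs k).
Proof.
have negbK_seq : involutive (map negb).
  by move=> s; rewrite -map_comp map_id_in // => b _ /=; rewrite negbK.
rewrite -[RHS]count_map; apply/permP/uniq_perm.
- exact: uniq_bitseqs.
- by rewrite map_inj_uniq ?uniq_bitseqs //; exact: inv_inj.
move=> s; rewrite mem_bitseqs; apply/idP/mapP => [hs|[u hu ->]].
  by exists (map negb s); rewrite ?negbK_seq // mem_bitseqs size_map.
by rewrite size_map -mem_bitseqs.
Qed.

Lemma weight_map_negb s : weight (map negb s) = size s - weight s.
Proof. by rewrite /weight -(count_predC id s) count_map addKn. Qed.

Lemma weight_bits n (x : bits n) : weight x <= n.
Proof. by rewrite -{2}(size_tuple x) count_size. Qed.

Lemma weight_bitseqs n z : z \in bitseqs n -> weight z <= n.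
Proof. by rewrite mem_bitseqs => /eqP <-; exact: count_size. Qed.

Lemma index_sorted_count (T : eqType) (le : rel T) (s : seq T) x :
  transitive le -> antisymmetric le -> sorted le s -> uniq s -> x \in s ->
  index x s = count (fun z => le z x && (z != x)) s.
Proof.
move=> tr an; elim: s => [//|a s IH] /= hs /andP[han hu] hx.
have hall := order_path_min tr hs.
case: (eqVneq a x) => [eax|nax].
  subst a; rewrite andbF add0n; apply/esym/eqP; rewrite -leqn0 leqNgt -has_count.
  apply/hasPn => z hz; apply/negP => /andP[hzx hne].
  by rewrite (an z x) ?eqxx ?hzx ?(allP hall z hz) in hne.
have hxs : x \in s by move: hx; rewrite inE eq_sym (negbTE nax).
by rewrite andbT (allP hall x hxs) IH ?(path_sorted hs).
Qed.

Lemma index_flatten_map (T I : eqType) (F : I -> seq T) (c : T -> I) l1 l2 x :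
  (forall i z, z \in F i -> c z = i) -> x \in F (c x) -> c x \notin l1 ->
  index x (flatten (map F (l1 ++ c x :: l2))) =
  sumn [seq size (F i) | i <- l1] + index x (F (c x)).
Proof.
move=> hF hx; elim: l1 => [|i l1 IH] /=; first by rewrite index_cat hx.
rewrite inE negb_or => /andP[hne hn].
have hxi : x \notin F i by apply/negP => /hF e; rewrite e eqxx in hne.
by rewrite index_cat (negbTE hxi) IH // addnA.
Qed.

Lemma sumn_map_count (T : eqType) (s : seq T) (c : T -> nat) l : uniq l ->
  sumn [seq count (fun z => c z == i) s | i <- l] = count (fun z => c z \in l) s.
Proof.
elim: l => [|i l IH] /=; first by rewrite count_pred0.
move=> /andP[hi hu]; rewrite IH // -count_predUI.
have -> : count (predI (fun z => c z == i) (fun z => c z \in l)) s = 0.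
  apply/eqP; rewrite -leqn0 leqNgt -has_count; apply/hasPn => z _ /=.
  by apply/negP => /andP[/eqP e he]; rewrite -e he in hi.
by rewrite addn0; apply: eq_count => z /=; rewrite inE.
Qed.

Lemma filter_iota_split (p : pred nat) n w : w <= n -> p w ->
  [seq i <- iota 0 n.+1 | p i] =
  [seq i <- iota 0 w | p i] ++ w :: [seq i <- iota w.+1 (n - w) | p i].
Proof.
move=> hw hp; have -> : n.+1 = w + (n - w).+1 by lia.
by rewrite iotaD filter_cat add0n /= hp.
Qed.

Section WeightClasses.
Variable n : nat.

Lemma mem_Sni i (t : bits n) : (t \in Sni n i) = (weight t == i).
Proof. by rewrite /Sni mem_sort mem_filter mem_enum andbT. Qed.

Lemma mem_Rni i (t : bits n) : (t \in Rni n i) = (weight t == i).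
Proof. by rewrite mem_rev mem_Sni. Qed.

Lemma uniq_Sni i : uniq (Sni n i).
Proof. by rewrite sort_uniq filter_uniq // enum_uniq. Qed.

Lemma sorted_Sni i : sorted (fun x y : bits n => lexle x y) (Sni n i).
Proof.
apply: sort_sorted => x y; rewrite /lexle.
case: (eqVneq (x : seq bool) y) => //= ne.
by apply: lexlt_total; rewrite ?size_tuple.
Qed.

Lemma count_Sni i (P : pred (seq bool)) :
  count (fun t : bits n => P t) (Sni n i) = count (fun z => (weight z == i) && P z) (bitseqs n).
Proof.
rewrite /Sni (permP (permEl (perm_sort _ _))) count_filter -count_enum_bits.
by apply: eq_count => z /=; rewrite andbC.
Qed.

Lemma size_Sni i : size (Sni n i) = count (fun z => weight z == i) (bitseqs n).
Proof. by rewrite -count_predT (count_Sni i predT); apply: eq_count => z; rewrite andbT. Qed.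

Lemma sumn_size_Sni l : uniq l ->
  sumn [seq size (Sni n i) | i <- l] = count (fun z => weight z \in l) (bitseqs n).
Proof. by move=> hl; rewrite -sumn_map_count //; congr sumn; apply: eq_map => i; rewrite size_Sni. Qed.

Lemma index_Sni (x : bits n) :
  index x (Sni n (weight x)) = count (fun z => (weight z == weight x) && lexlt z x) (bitseqs n).
Proof.
rewrite (@index_sorted_count _ (fun x y : bits n => lexle x y)) ?uniq_Sni ?sorted_Sni ?mem_Sni //.
- by rewrite -count_Sni; apply: eq_count => z /=; rewrite lexlt_def andbC eq_sym.
- by move=> b a c; exact: lexle_trans.
- by move=> a b /andP[h1 h2]; apply: val_inj; exact: lexle_anti.
Qed.

Lemma index_Rni (x : bits n) :
  index x (Rni n (weight x)) = count (fun z => (weight z == weight x) && lexlt x z) (bitseqs n).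
Proof.
rewrite (@index_sorted_count _ (fun x y : bits n => lexle y x)) ?rev_uniq ?uniq_Sni ?mem_Rni //.
- by rewrite count_rev -count_Sni; apply: eq_count => z /=; rewrite lexlt_def andbC.
- by move=> b a c h1 h2; exact: lexle_trans h2 h1.
- by move=> a b /andP[h1 h2]; apply: val_inj; exact: lexle_anti.
- by rewrite rev_sorted; exact: sorted_Sni.
Qed.

Lemma sumn_size_Rni l : uniq l ->
  sumn [seq size (Rni n i) | i <- l] = count (fun z => weight z \in l) (bitseqs n).
Proof. by move=> hl; rewrite -sumn_size_Sni //; congr sumn; apply: eq_map => i; rewrite size_rev. Qed.

Lemma fn_odd (x : bits n) : odd (weight x) ->
  fn x = count (fun z => odd (weight z) && (weight z < weight x)) (bitseqs n)
       + count (fun z => (weight z == weight x) && lexlt x z) (bitseqs n) + 1.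
Proof.
move=> hodd; rewrite /fn /Sn index_cat.
have hx : x \in Rni n (weight x) by rewrite mem_Rni.
have -> : x \in flatten [seq Rni n i | i <- iota 0 n.+1 & odd i].
  by apply/flatten_mapP; exists (weight x); rewrite // mem_filter hodd mem_iota ltnS weight_bits.
rewrite (filter_iota_split (weight_bits x) hodd).
rewrite (@index_flatten_map _ _ (Rni n) (fun t : bits n => weight t)); first last.
- by rewrite mem_filter mem_iota add0n ltnn !andbF.
- exact: hx.
- by move=> i z; rewrite mem_Rni => /eqP.
rewrite index_Rni sumn_size_Rni ?filter_uniq ?iota_uniq // addn1.
by congr (_ + _).+1; apply: eq_count => z; rewrite mem_filter mem_iota.
Qed.

Lemma fn_even (x : bits n) : ~~ odd (weight x) ->
  fn x = count (fun z => odd (weight z)) (bitseqs n)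
       + count (fun z => ~~ odd (weight z) && (weight x < weight z)) (bitseqs n)
       + count (fun z => (weight z == weight x) && lexlt z x) (bitseqs n) + 1.
Proof.
move=> hev; rewrite /fn /Sn index_cat.
have hx : x \in Sni n (weight x) by rewrite mem_Sni.
have -> : x \in flatten [seq Rni n i | i <- iota 0 n.+1 & odd i] = false.
  apply/negP => /flatten_mapP[i]; rewrite mem_filter mem_Rni => /andP[hi _] /eqP e.
  by rewrite e hi in hev.
rewrite size_flatten /shape -map_comp sumn_size_Rni ?filter_uniq ?iota_uniq //.
rewrite (filter_iota_split (weight_bits x) hev) rev_cat /= rev_cons cat_rcons.
rewrite (@index_flatten_map _ _ (Sni n) (fun t : bits n => weight t)); first last.
- by rewrite mem_rev mem_filter mem_iota ltnn !andbF.
- exact: hx.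
- by move=> i z; rewrite mem_Sni => /eqP.
rewrite index_Sni sumn_size_Sni ?rev_uniq ?filter_uniq ?iota_uniq // addn1 -addnA.
congr (_ + (_ + _)).+1; apply: eq_in_count => z /weight_bitseqs hz.
- by rewrite mem_filter mem_iota; case: (weight z) hz => [|w] hw //=; rewrite add1n ltnS hw andbT.
- by rewrite mem_rev mem_filter mem_iota; congr (_ && _); lia.
Qed.

End WeightClasses.

Definition nbits k (p : pred nat) := count (fun z => p (weight z)) (bitseqs k).
Arguments nbits : simpl never.

Lemma eq_in_count_add (T : eqType) (s : seq T) (P Q R : pred T) :
  {in s, forall z, P z + Q z = R z} -> count P s + count Q s = count R s.
Proof.
elim: s => [|z s IH] //= h.
rewrite -(h z (mem_head _ _)) -IH; first lia.
by move=> u hu; apply: h; rewrite inE hu orbT.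
Qed.

Lemma nbitsD k (P Q R : pred nat) :
  (forall j, j <= k -> P j + Q j = R j) -> nbits k P + nbits k Q = nbits k R.
Proof. by move=> h; apply: eq_in_count_add => z /weight_bitseqs; exact: h. Qed.

Lemma eq_nbits k (P Q : pred nat) : (forall j, j <= k -> P j = Q j) -> nbits k P = nbits k Q.
Proof. by move=> h; apply: eq_in_count => z /weight_bitseqs; exact: h. Qed.

Lemma nbitsS k p : nbits k.+1 p = nbits k (fun j => p j.+1) + nbits k p.
Proof. by rewrite /nbits count_bitseqsS. Qed.

Lemma nbitsSS k p :
  nbits k.+2 p = nbits k (fun j => p j.+2) + 2 * nbits k (fun j => p j.+1) + nbits k p.
Proof. by rewrite nbitsS !(nbitsS k); lia. Qed.

Lemma nbits_compl k p : nbits k p = nbits k (fun j => p (k - j)).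
Proof.
rewrite /nbits count_bitseqs_negb; apply: eq_in_count => z.
by rewrite mem_bitseqs weight_map_negb => /eqP ->.
Qed.

Lemma nbitsT k : nbits k predT = 2 ^ k.
Proof. by rewrite /nbits count_predT size_bitseqs. Qed.

Lemma nbits_eq k i : nbits k (fun j => j == i) = 'C(k, i).
Proof.
elim: k i => [|k IH] [|i] //; rewrite nbitsS.
  by rewrite IH bin0 (@eq_nbits _ _ pred0) // /nbits count_pred0.
by rewrite binS -!IH addnC.
Qed.

Lemma nbits_even_odd k : 0 < k -> nbits k (fun j => ~~ odd j) = nbits k odd.
Proof.
case: k => // k _; rewrite !nbitsS addnC.
by congr (_ + _); apply: eq_nbits => j _ /=; rewrite negbK.
Qed.

(* The alternating binomial sum \sum_(j <= k) (-1)^(j+1) 'C(m.+1, j) = 'C(m, k), k odd. *)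
Lemma nbits_odd_below m k : odd k ->
  nbits m.+1 (fun j => odd j && (j < k.+1)) =
  nbits m.+1 (fun j => ~~ odd j && (j < k.+1)) + 'C(m, k).
Proof.
move=> hk; rewrite !nbitsS -nbits_eq.
have -> : nbits m (fun j => odd j && (j < k.+1)) =
          nbits m (fun j => odd j && (j < k)) + nbits m (fun j => j == k).
  by apply/esym/nbitsD => j; lia.
have -> : nbits m (fun j => ~~ odd j && (j < k.+1)) = nbits m (fun j => ~~ odd j && (j < k)).
  by apply: eq_nbits => j; lia.
have -> : nbits m (fun j => ~~ odd j.+1 && (j.+1 < k.+1)) = nbits m (fun j => odd j && (j < k)).
  by apply: eq_nbits => j; lia.
have -> : nbits m (fun j => odd j.+1 && (j.+1 < k.+1)) = nbits m (fun j => ~~ odd j && (j < k)).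
  by apply: eq_nbits => j; lia.
lia.
Qed.

Section WeightCountGap.
Variable m : nat.
Hypotheses (m_even : ~~ odd m) (m_ge2 : 2 <= m).

Local Notation evens_below k := (nbits m (fun j => ~~ odd j && (j < k))).
Local Notation odds_below k := (nbits m (fun j => odd j && (j < k))).
Local Notation evens_from k := (nbits m (fun j => ~~ odd j && (k <= j))).
Local Notation odds_from k := (nbits m (fun j => odd j && (k <= j))).
Local Notation level k := (nbits m (fun j => j == k)).
Local Notation evens := (nbits m (fun j => ~~ odd j)).
Local Notation odds := (nbits m odd).

Lemma evens_odds_half : evens + odds = 2 ^ m /\ evens = odds.
Proof.
split; last by apply: nbits_even_odd; lia.
by rewrite -nbitsT; apply: nbitsD => j _; case: (odd j).
Qed.

Lemma odds_below_le a : ~~ odd a -> odds_below a <= evens_below a + 'C(m.-1, uphalf m.-1).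
Proof.
case: a => [_|k hk].
  by rewrite (@eq_nbits _ _ pred0) => [|j _]; [rewrite /nbits count_pred0 | rewrite andbF].
case: m m_ge2 => // m' _; rewrite nbits_odd_below ?leq_add2l ?leq_bin_uphalf //.
by rewrite /= negbK in hk.
Qed.

(* Up to terms common to both sides, these are f_(m+2)(10x') + f_(m+2)(10y') and
   f_m(x'') + f_m(y'') plus the bound, for |x'| = a and |y'| = a + 1: the ranks of
   x'' and y'' inside their weight classes also occur on the left (see [fn_cons10_le]). *)
Lemma weight_count_gap_succ a : ~~ odd a -> a.+1 <= m ->
  nbits m.+2 (fun j => odd j && (j < a.+1)) + nbits m (fun j => j.+2 == a.+1)
  + (nbits m.+2 odd + nbits m.+2 (fun j => ~~ odd j && (a.+2 < j)) + nbits m.+1 (fun j => j == a.+2))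
  <= nbits m odd + nbits m (fun j => ~~ odd j && (m - a < j))
     + nbits m (fun j => odd j && (j < m - a.+1))
     + 3 * 2 ^ m + 'C(m.-1, uphalf m.-1) + 'C(m, uphalf m).
Proof.
move=> ha ham.
have h1 : nbits m.+2 (fun j => odd j && (j < a.+1)) =
          nbits m (fun j => odd j && (j.+1 < a)) + 2 * evens_below a + odds_below a.
  by rewrite nbitsSS; congr (_ + 2 * _ + _); apply: eq_nbits => j; lia.
have h2 : nbits m (fun j => odd j && (j.+1 < a)) + nbits m (fun j => j.+2 == a.+1) = odds_below a.
  by apply: nbitsD => j; lia.
have h3 : nbits m.+2 odd = odds + 2 * evens + odds.
  by rewrite nbitsSS; congr (_ + 2 * _ + _); apply: eq_nbits => j; lia.
have h4 : nbits m.+2 (fun j => ~~ odd j && (a.+2 < j)) =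
          evens_from a.+1 + 2 * odds_from a.+2 + evens_from a.+3.
  by rewrite nbitsSS; congr (_ + 2 * _ + _); apply: eq_nbits => j; lia.
have h5 : nbits m.+1 (fun j => j == a.+2) = level a.+1 + level a.+2.
  by rewrite nbitsS; congr (_ + _); apply: eq_nbits => j; lia.
have h6 : nbits m (fun j => ~~ odd j && (m - a < j)) = evens_below a.
  by rewrite nbits_compl; apply: eq_nbits => j; lia.
have h7 : nbits m (fun j => odd j && (j < m - a.+1)) = odds_from a.+2.
  by rewrite nbits_compl; apply: eq_nbits => j; lia.
have h8 : evens_from a.+1 + evens_below a.+1 = evens by apply: nbitsD => j; lia.
have h9 : odds_from a.+2 + odds_below a.+2 = odds by apply: nbitsD => j; lia.
have h10 : evens_from a.+3 + evens_below a.+3 = evens by apply: nbitsD => j; lia.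
have h11 : evens_below a + level a = evens_below a.+1 by apply: nbitsD => j; lia.
have h12 : evens_below a.+1 + level a.+2 = evens_below a.+3 by apply: nbitsD => j; lia.
have h13 : odds_below a + level a.+1 = odds_below a.+2 by apply: nbitsD => j; lia.
have [h14 h15] := evens_odds_half.
have h16 := odds_below_le ha.
lia.
Qed.

(* The same comparison when |x'| = b + 1 and |y'| = b with b odd. *)
Lemma weight_count_gap_pred b : odd b -> b.+1 <= m ->
  nbits m.+2 (fun j => odd j && (j < b.+2)) + nbits m (fun j => j.+2 == b.+2)
  + (nbits m.+2 odd + nbits m.+2 (fun j => ~~ odd j && (b.+1 < j)) + nbits m.+1 (fun j => j == b.+1))
  <= nbits m odd + nbits m (fun j => ~~ odd j && (m - b.+1 < j))
     + nbits m (fun j => odd j && (j < m - b))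
     + 3 * 2 ^ m + 'C(m.-1, uphalf m.-1) + 'C(m, uphalf m).
Proof.
move=> hb hbm.
have g1 : nbits m.+2 (fun j => odd j && (j < b.+2)) =
          odds_below b + 2 * evens_below b.+1 + odds_below b.+2.
  by rewrite nbitsSS; congr (_ + 2 * _ + _); apply: eq_nbits => j; lia.
have g2 : nbits m (fun j => j.+2 == b.+2) = level b by apply: eq_nbits => j; lia.
have g3 : nbits m.+2 odd = odds + 2 * evens + odds.
  by rewrite nbitsSS; congr (_ + 2 * _ + _); apply: eq_nbits => j; lia.
have g4 : nbits m.+2 (fun j => ~~ odd j && (b.+1 < j)) =
          evens_from b + 2 * odds_from b.+1 + evens_from b.+2.
  by rewrite nbitsSS; congr (_ + 2 * _ + _); apply: eq_nbits => j; lia.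
have g5 : nbits m.+1 (fun j => j == b.+1) = level b + level b.+1.
  by rewrite nbitsS; congr (_ + _); apply: eq_nbits => j; lia.
have g6 : nbits m (fun j => ~~ odd j && (m - b.+1 < j)) = evens_below b.+1.
  by rewrite nbits_compl; apply: eq_nbits => j; lia.
have g7 : nbits m (fun j => odd j && (j < m - b)) = odds_from b.+1.
  by rewrite nbits_compl; apply: eq_nbits => j; lia.
have g8 : evens_from b + evens_below b = evens by apply: nbitsD => j; lia.
have g9 : odds_from b.+1 + odds_below b.+1 = odds by apply: nbitsD => j; lia.
have g10 : evens_from b.+2 + evens_below b.+2 = evens by apply: nbitsD => j; lia.
have g11 : evens_below b = evens_below b.+1 by apply: eq_nbits => j; lia.
have g12 : odds_below b + level b = odds_below b.+1 by apply: nbitsD => j; lia.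
have g13 : odds_below b.+1 = odds_below b.+2 by apply: eq_nbits => j; lia.
have g14 : evens_below b.+1 + level b.+1 = evens_below b.+2 by apply: nbitsD => j; lia.
have [g15 g16] := evens_odds_half.
have g17 : odds_below b.+1 = evens_below b.+1 + 'C(m.-1, b).
  by case: m m_ge2 => // m' _; rewrite nbits_odd_below.
have g18 : level b + 'C(m.-1, b) <= 'C(m.-1, uphalf m.-1) + 'C(m, uphalf m).
  by rewrite nbits_eq addnC; apply: leq_add; exact: leq_bin_uphalf.
lia.
Qed.

End WeightCountGap.

Fixpoint hamming (s t : seq bool) : nat :=
  if (s, t) is (a :: s', b :: t') then (a != b) + hamming s' t' else 0.

Lemma sum_nth_neq k s t : size s = k -> size t = k ->
  \sum_(i < k) (nth false s i != nth false t i) = hamming s t.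
Proof.
elim: k s t => [|k IH] [|a s] [|b t] //=; first by rewrite big_ord0.
by move=> [hs] [ht]; rewrite big_ord_recl /= IH.
Qed.

Lemma hadjE k (x y : bits k) : hadj x y = (hamming x y == 1).
Proof.
rewrite /hadj -(sum_nth_neq (size_tuple x) (size_tuple y)).
by congr (_ == 1); apply: eq_bigr => i _; rewrite !(tnth_nth false).
Qed.

Lemma hamming_map_negb s t : hamming (map negb s) (map negb t) = hamming s t.
Proof. by elim: s t => [|a s IH] [|b t] //=; rewrite IH; case: a; case: b. Qed.

Lemma hammingC s t : hamming s t = hamming t s.
Proof. by elim: s t => [|a s IH] [|b t] //=; rewrite IH eq_sym. Qed.

Lemma hamming_eq0 s t : size s = size t -> hamming s t = 0 -> s = t.
Proof.
elim: s t => [|a s IH] [|b t] //= [hs]; case: (eqVneq a b) => [->|] //= h.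
by rewrite (IH t).
Qed.

Lemma hamming1_weight s t : size s = size t -> hamming s t = 1 ->
  weight t = (weight s).+1 \/ weight s = (weight t).+1.
Proof.
elim: s t => [|a s IH] [|b t] // [hs] /=.
case: (eqVneq a b) => [->|ne] /= h.
  by case: (IH t hs h) => ->; [left|right]; lia.
rewrite (hamming_eq0 hs (eq_add_S _ _ h)).
by case: a b ne {h} => [] [] //= _; [right|left].
Qed.

Lemma odd_weight_hamming1 s t : size s = size t -> hamming s t = 1 ->
  odd (weight t) = ~~ odd (weight s).
Proof. by move=> hst /(hamming1_weight hst) [] ->; rewrite /= ?negbK. Qed.

Lemma leq_strQ n (x y : bits n) : hadj x y -> fn x + fn y <= strQ n.
Proof. by move=> hxy; apply: (leq_bigmax_cond (x, y)). Qed.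

Section Cons10.
Variable m : nat.

Lemma rank_above_cons10 s :
  count (fun z => (weight z == (weight s).+1) && lexlt [:: true, false & s] z) (bitseqs m.+2) =
  nbits m (fun j => j.+2 == (weight s).+1)
  + count (fun z => (weight z == weight s) && lexlt s z) (bitseqs m).
Proof.
rewrite !count_bitseqsS /nbits.
rewrite [X in _ + _ + (X + _)](@eq_count _ _ pred0) ?count_pred0 => [|z /=]; last by rewrite andbF.
rewrite [X in _ + _ + (_ + X)](@eq_count _ _ pred0) ?count_pred0 => [|z /=]; last by rewrite andbF.
by rewrite !addn0; congr (_ + _); apply: eq_count => z /=; rewrite andbT.
Qed.

Lemma rank_below_cons10 s :
  count (fun z => (weight z == (weight s).+1) && lexlt z [:: true, false & s]) (bitseqs m.+2) =
  count (fun z => (weight z == weight s) && lexlt z s) (bitseqs m)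
  + nbits m.+1 (fun j => j == (weight s).+1).
Proof.
rewrite (count_bitseqsS m.+1) count_bitseqsS /nbits.
rewrite [X in X + _ + _](@eq_count _ _ pred0) ?count_pred0 => [|z /=]; last by rewrite andbF.
by congr (_ + _); apply: eq_count => z /=; rewrite andbT.
Qed.

Lemma count_weight_map_negb s (P : pred (seq bool)) : size s = m ->
  count (fun z => (weight z == weight (map negb s)) && P z) (bitseqs m) =
  count (fun z => (weight z == weight s) && P (map negb z)) (bitseqs m).
Proof.
move=> hs; rewrite count_bitseqs_negb; apply: eq_in_count => z; rewrite mem_bitseqs => /eqP hz.
rewrite !weight_map_negb hz hs; congr (_ && _).
by have := count_size id z; have := count_size id s; rewrite hz hs /weight => h1 h2; apply/eqP/eqP; lia.
Qed.

Lemma rank_below_map_negb s : size s = m ->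
  count (fun z => (weight z == weight (map negb s)) && lexlt z (map negb s)) (bitseqs m) =
  count (fun z => (weight z == weight s) && lexlt s z) (bitseqs m).
Proof.
move=> hs; rewrite count_weight_map_negb //; apply: eq_in_count => z.
by rewrite mem_bitseqs => /eqP hz; rewrite lexlt_map_negb ?hz.
Qed.

Lemma rank_above_map_negb s : size s = m ->
  count (fun z => (weight z == weight (map negb s)) && lexlt (map negb s) z) (bitseqs m) =
  count (fun z => (weight z == weight s) && lexlt z s) (bitseqs m).
Proof.
move=> hs; rewrite count_weight_map_negb //; apply: eq_in_count => z.
by rewrite mem_bitseqs => /eqP hz; rewrite lexlt_map_negb ?hz.
Qed.

End Cons10.

Lemma fn_cons10_le m (x y : bits m) :
  ~~ odd m -> 2 <= m -> ~~ odd (weight x) -> hamming x y = 1 ->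
  fn (cons_tuple true (cons_tuple false x)) + fn (cons_tuple true (cons_tuple false y))
  <= fn (map_tuple negb x) + fn (map_tuple negb y)
     + 3 * 2 ^ m + 'C(m.-1, uphalf m.-1) + 'C(m, uphalf m).
Proof.
move=> hm hm2 ha hd.
have hxy : size x = size y by rewrite !size_tuple.
have hb : odd (weight y) by rewrite (odd_weight_hamming1 hxy hd) ha.
have wxb : weight (map_tuple negb x) = m - weight x by rewrite /= weight_map_negb size_tuple.
have wyb : weight (map_tuple negb y) = m - weight y by rewrite /= weight_map_negb size_tuple.
have ham := weight_bits x; have hbm := weight_bits y.
have wX : weight (cons_tuple true (cons_tuple false x)) = (weight x).+1 by [].
have wY : weight (cons_tuple true (cons_tuple false y)) = (weight y).+1 by [].
rewrite fn_odd wX; last by lia.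
rewrite fn_even wY; last by lia.
rewrite fn_even; last by rewrite wxb; lia.
rewrite fn_odd; last by rewrite wyb; lia.
rewrite rank_above_cons10 rank_below_cons10.
rewrite rank_below_map_negb ?rank_above_map_negb ?size_tuple // wxb wyb.
case: (hamming1_weight hxy hd) => e.
- have := weight_count_gap_succ hm hm2 ha; rewrite /nbits -e => /(_ hbm); lia.
- have := weight_count_gap_pred hm hm2 hb; rewrite /nbits -e => /(_ ham); lia.
Qed.

Theorem theorem2p8 (n : nat) (hn : 5 <= n) (hev : ~~ odd n) (x y : bits n) :
  hadj x y -> fn x + fn y = strQ n ->
  take 2 x = [:: true; false] -> take 2 y = [:: true; false] ->
  strQ n <= strQ (n - 2) + 3 * 2 ^ (n - 2)
            + 'C(n - 3, uphalf (n - 3)) + 'C(n - 2, uphalf (n - 2)).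
Proof.
case: n hn hev x y => [|[|m]] // hn hev x y hxy <- hx hy.
have -> : m.+2 - 2 = m by lia.
have -> : m.+2 - 3 = m.-1 by lia.
case/tupleP: x hx hxy => a0 x; case/tupleP: x => a1 x.
case/tupleP: y hy => b0 y; case/tupleP: y => b1 y.
move=> /= [-> -> _] [-> -> _] hxy.
have hm : ~~ odd m by rewrite /= negbK in hev.
have hm2 : 2 <= m by lia.
have hd : hamming x y = 1 by move: hxy; rewrite hadjE => /eqP.
have hs : fn (map_tuple negb x) + fn (map_tuple negb y) <= strQ m.
  by apply: leq_strQ; rewrite hadjE /= hamming_map_negb hd.
have [hx|hx] := boolP (odd (weight x)); last first.
  by apply: leq_trans (fn_cons10_le hm hm2 hx hd) _; rewrite !leq_add2r.
have hy : ~~ odd (weight y) by rewrite (odd_weight_hamming1 _ hd) ?hx ?size_tuple.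
rewrite addnC; apply: leq_trans (fn_cons10_le hm hm2 hy _) _; first by rewrite hammingC.
by rewrite !leq_add2r addnC.
Qed.
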